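(* Let $n\ge1$ and $\alpha,\beta,u,v\in V_n$. There exists a valid rectangular pattern with tiles in $\mathcal T'_n$ whose right, top, left and bottom labels are respectively $\tau_n(\alpha)$, $\tau_n(\beta)$, $\tau_n(u)$ and $\tau_n(v)$ if and only if the Wang tile $(\alpha,\beta,u,v)$ (right $\alpha$, top $\beta$, left $u$, bottom $v$) belongs to $\mathcal T'_n$.
   Context: Write $\bar m=m+1$. $V_n=\{(v_0,v_1,v_2)\in\mathbb{Z}^3: 0\le v_0\le v_1\le 1,\ v_1\le v_2\le n+1\}$, elements written as words $v_0v_1v_2$. A Wang tile is $t=(a,b,c,d)$ with $\mathrm{RIGHT}(t)=a$, $\mathrm{TOP}(t)=b$, $\mathrm{LEFT}(t)=c$, $\mathrm{BOTTOM}(t)=d$; $\hat t=(b,a,d,c)$, $\hat S=\{\hat t:t\in S\}$. Define (as (right, top, left, bottom)): $W_n=\{(11(i+1),11(j+1),11i,11j):1\le i,j\le n\}$; $B'_n=\{(00(i+1),111,00i,11n):0\le i\le n\}$; $G_n=\{(01(i+1),111,00i,11(n+1)):0\le i\le n\}$; $Y_n=\{(01(i+1),112,01i,11(n+1)):1\le i\le n\}$; $A_n=\{(00(i+1),112,01i,11n):1\le i\le n\}$; $J'_n=\{((0,k,l),(0,r,s),(0,s,r+n),(0,l,k+n)):(k,l),(r,s)\in\{(0,0),(0,1),(1,1)\}\}$. $\mathcal T'_n=W_n\cup B'_n\cup G_n\cup Y_n\cup A_n\cup\hat B'_n\cup\hat G_n\cup\hat Y_n\cup\hat A_n\cup J'_n$.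 A rectangular pattern is valid if adjacent tiles agree on common edges; its bottom (top) labels are those of its bottom (top) row read left to right, its left (right) labels those of its left (right) column read bottom to top. $\tau_n:V_n\to V_n^*$ is $\tau_n(xyz)=(0,x-y+1,n)\cdot(11n)^{z-x-1}\cdot(11\bar n)^{n+1-z}$ if $x\ne z$, and $\tau_n(xyz)=(0,x-y+1,n+1)\cdot(11\bar n)^{n-z}$ if $x=z$. *)

From mathcomp Require Import all_boot.
Set Implicit Arguments. Unset Strict Implicit. Unset Printing Implicit Defensive.

Definition label := (nat * nat * nat)%type.
Definition lab (a b c : nat) : label := (a, b, c).

Definition inV (n : nat) (v : label) : Prop :=
  let: (v0, v1, v2) := v in v0 <= v1 /\ v1 <= 1 /\ v1 <= v2 /\ v2 <= n.+1.

Definition tile := (label * label * label * label)%type.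
Definition mkt (a b c d : label) : tile := (a, b, c, d).
Definition RIGHT (t : tile) : label := let: (a, _, _, _) := t in a.
Definition TOP (t : tile) : label := let: (_, b, _, _) := t in b.
Definition LEFT (t : tile) : label := let: (_, _, c, _) := t in c.
Definition BOTTOM (t : tile) : label := let: (_, _, _, d) := t in d.
Definition hat (t : tile) : tile := let: (a, b, c, d) := t in (b, a, d, c).

Definition inW (n : nat) (t : tile) : Prop :=
  exists i j, [/\ 1 <= i <= n, 1 <= j <= n &
    t = mkt (lab 1 1 i.+1) (lab 1 1 j.+1) (lab 1 1 i) (lab 1 1 j)].
Definition inB' (n : nat) (t : tile) : Prop :=
  exists i, i <= n /\ t = mkt (lab 0 0 i.+1) (lab 1 1 1) (lab 0 0 i) (lab 1 1 n).
Definition inG (n : nat) (t : tile) : Prop :=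
  exists i, i <= n /\ t = mkt (lab 0 1 i.+1) (lab 1 1 1) (lab 0 0 i) (lab 1 1 n.+1).
Definition inY (n : nat) (t : tile) : Prop :=
  exists i, 1 <= i <= n /\ t = mkt (lab 0 1 i.+1) (lab 1 1 2) (lab 0 1 i) (lab 1 1 n.+1).
Definition inA (n : nat) (t : tile) : Prop :=
  exists i, 1 <= i <= n /\ t = mkt (lab 0 0 i.+1) (lab 1 1 2) (lab 0 1 i) (lab 1 1 n).

Definition okpair (k l : nat) : Prop := (k, l) = (0, 0) \/ (k, l) = (0, 1) \/ (k, l) = (1, 1).
Definition inJ' (n : nat) (t : tile) : Prop :=
  exists k l r s, [/\ okpair k l, okpair r s &
    t = mkt (lab 0 k l) (lab 0 r s) (lab 0 s (r + n)) (lab 0 l (k + n))].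

Definition inhat (S : tile -> Prop) (t : tile) : Prop := exists s, S s /\ t = hat s.

Definition inT' (n : nat) (t : tile) : Prop :=
  inW n t \/ inB' n t \/ inG n t \/ inY n t \/ inA n t \/
  inhat (inB' n) t \/ inhat (inG n) t \/ inhat (inY n) t \/ inhat (inA n) t \/
  inJ' n t.

Definition tau (n : nat) (v : label) : seq label :=
  let: (x, y, z) := v in
  if x != z then
    lab 0 (x + 1 - y) n :: nseq (z - x - 1) (lab 1 1 n) ++ nseq (n + 1 - z) (lab 1 1 n.+1)
  else
    lab 0 (x + 1 - y) n.+1 :: nseq (n - z) (lab 1 1 n.+1).

(* A rectangular pattern of width w and height h: f i j is the tile in
   column i (0 <= i < w, left to right) and row j (0 <= j < h, bottom to top). *)
Definition valid_pattern (T : tile -> Prop) (w h : nat) (f : nat -> nat -> tile) : Prop :=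
  [/\ forall i j, i < w -> j < h -> T (f i j),
      forall i j, i.+1 < w -> j < h -> RIGHT (f i j) = LEFT (f i.+1 j) &
      forall i j, i < w -> j.+1 < h -> TOP (f i j) = BOTTOM (f i j.+1)].

Definition bottom_labels (w h : nat) (f : nat -> nat -> tile) : seq label :=
  [seq BOTTOM (f i 0) | i <- iota 0 w].
Definition top_labels (w h : nat) (f : nat -> nat -> tile) : seq label :=
  [seq TOP (f i h.-1) | i <- iota 0 w].
Definition left_labels (w h : nat) (f : nat -> nat -> tile) : seq label :=
  [seq LEFT (f 0 j) | j <- iota 0 h].
Definition right_labels (w h : nat) (f : nat -> nat -> tile) : seq label :=
  [seq RIGHT (f w.-1 j) | j <- iota 0 h].

From mathcomp Require Import all_boot zify.

Set Implicit Arguments.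
Unset Strict Implicit.
Unset Printing Implicit Defensive.

(* Inside a pattern whose left and bottom words are tau(u) and
   tau(v), every tile of T'_n is determined by its left and bottom labels, so
   the whole labelling is forced: the corner is a J' tile, the bottom row uses
   B', G, Y, A, the left column their transposes, and the interior W.  The
   forced right and top words are of the form tau(alpha), tau(beta) exactly
   when (u, v) is the left/bottom pair of some tile of T'_n, and that tile
   reproduces them; since tau is injective on V_n, the tile is
   (alpha, beta, u, v). *)

Lemma map_iota0_eq (T : Type) (F G : nat -> T) h k :
  [seq F j | j <- iota 0 h] = [seq G j | j <- iota 0 k] <->
  h = k /\ (forall j, j < h -> F j = G j).
Proof.
split=> [eFG | [<- eFG]].
  have ehk : h = k by rewrite -(size_iota 0 h) -(size_map F) eFG size_map size_iota.
  subst k; split=> // j lt_jh; move/eq_in_map: eFG; apply.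
  by rewrite mem_iota.
by apply/eq_in_map=> j; rewrite mem_iota => /andP[_ lt_jh]; apply: eFG.
Qed.

Lemma tile_eta (t : tile) : t = mkt (RIGHT t) (TOP t) (LEFT t) (BOTTOM t).
Proof. by case: t => [[[]]]. Qed.

Lemma lab_inj a b c a' b' c' : lab a b c = lab a' b' c' -> [/\ a = a', b = b' & c = c'].
Proof. by case. Qed.

Lemma lab_eq a b c a' b' c' : a = a' -> b = b' -> c = c' -> lab a b c = lab a' b' c'.
Proof. by move=> -> -> ->. Qed.

Lemma hatK : involutive hat.
Proof. by case=> [[[]]]. Qed.

Section EdgeLabelling.

Variables (H V : nat -> nat -> label).

Definition edge_pattern (i j : nat) : tile := mkt (H i.+1 j) (V i j.+1) (H i j) (V i j).

Lemma edge_pattern_valid (T : tile -> Prop) w h :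
  (forall i j, i < w -> j < h -> T (edge_pattern i j)) ->
  valid_pattern T w h edge_pattern.
Proof. by split. Qed.

Lemma edge_pattern_labels w h : 0 < w -> 0 < h ->
  [/\ right_labels w h edge_pattern = [seq H w j | j <- iota 0 h],
      top_labels w h edge_pattern = [seq V i h | i <- iota 0 w],
      left_labels w h edge_pattern = [seq H 0 j | j <- iota 0 h] &
      bottom_labels w h edge_pattern = [seq V i 0 | i <- iota 0 w]].
Proof. by move=> /prednK ew /prednK eh; rewrite /right_labels /top_labels /= ew eh. Qed.

Variable T : tile -> Prop.
Hypothesis T_determined : forall i j t, T t -> LEFT t = H i j -> BOTTOM t = V i j ->
  RIGHT t = H i.+1 j /\ TOP t = V i j.+1.

Lemma valid_pattern_edges w h f : valid_pattern T w h f ->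
  (forall j, j < h -> LEFT (f 0 j) = H 0 j) ->
  (forall i, i < w -> BOTTOM (f i 0) = V i 0) ->
  forall i j, i < w -> j < h -> f i j = edge_pattern i j.
Proof.
move=> [fT fR fU] fL fB.
have step i j : i < w -> j < h -> LEFT (f i j) = H i j -> BOTTOM (f i j) = V i j ->
    RIGHT (f i j) = H i.+1 j /\ TOP (f i j) = V i j.+1.
  by move=> lt_iw lt_jh; apply: T_determined; apply: fT.
have edges k i j : i + j < k -> i < w -> j < h ->
    LEFT (f i j) = H i j /\ BOTTOM (f i j) = V i j.
  elim: k i j => // k IHk i j lt_ijk lt_iw lt_jh; split.
  - case: i lt_ijk lt_iw => [|i] lt_ijk lt_iw; first exact: fL.
    have [eL eB] := IHk i j ltac:(lia) (ltnW lt_iw) lt_jh.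
    by rewrite -fR // (step i j (ltnW lt_iw) lt_jh eL eB).1.
  - case: j lt_ijk lt_jh => [|j] lt_ijk lt_jh; first exact: fB.
    have [eL eB] := IHk i j ltac:(lia) lt_iw (ltnW lt_jh).
    by rewrite -fU // (step i j lt_iw (ltnW lt_jh) eL eB).2.
move=> i j lt_iw lt_jh; have [eL eB] := edges (i + j).+1 i j (ltnSn _) lt_iw lt_jh.
by have [eR eU] := step i j lt_iw lt_jh eL eB; rewrite [f i j]tile_eta eR eU eL eB.
Qed.

Lemma valid_pattern_labels w h f : 0 < w -> 0 < h -> valid_pattern T w h f ->
  left_labels w h f = [seq H 0 j | j <- iota 0 h] ->
  bottom_labels w h f = [seq V i 0 | i <- iota 0 w] ->
  right_labels w h f = [seq H w j | j <- iota 0 h] /\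
  top_labels w h f = [seq V i h | i <- iota 0 w].
Proof.
move=> w_gt0 h_gt0 fP /map_iota0_eq[_ fL] /map_iota0_eq[_ fB].
have ef := valid_pattern_edges fP fL fB.
have [<- <- _ _] := edge_pattern_labels w_gt0 h_gt0.
split; apply/map_iota0_eq; split=> // k lt_k; rewrite ef //; lia.
Qed.

End EdgeLabelling.

Definition tau_letter (n : nat) (v : label) (j : nat) : label :=
  if j == 0 then lab 0 (v.1.1 + 1 - v.1.2) (n + (v.2 <= v.1.1))
  else lab 1 1 (n + (v.2 <= j + v.1.1)).

Lemma tau_map n v : 0 < n -> inV n v ->
  tau n v = [seq tau_letter n v j | j <- iota 0 (n.+1 - v.1.1)].
Proof.
case: v => [[x y] z] n_gt0 /= [le_xy [le_y1 [le_yz le_zn]]].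
rewrite /tau /tau_letter; apply/esym/(@eq_from_nth _ (lab 0 0 0)).
  by rewrite size_map size_iota; case: eqP => ? /=; rewrite ?size_cat !size_nseq; lia.
rewrite size_map size_iota => j lt_j; rewrite (nth_map 0) ?size_iota // nth_iota //.
case: j lt_j => [|j] lt_j /=; case: eqP => [<-|ne_xz] /=;
  rewrite ?nth_cat ?size_nseq ?nth_nseq; repeat case: ifP => ?; apply: lab_eq; lia.
Qed.

Lemma tau_inj n a b : 0 < n -> inV n a -> inV n b -> tau n a = tau n b -> a = b.
Proof.
move=> n_gt0 Va Vb; rewrite !tau_map // => /map_iota0_eq[e0 e_letter].
move: Va Vb e0 e_letter; case: a => [[a0 a1] a2]; case: b => [[b0 b1] b2] /=.
move=> [? [? [? ?]]] [? [? [? ?]]] e0 e_letter.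
have e2 : a2 = b2.
  apply/eqP; apply: contraT => ne2.
  have := e_letter (minn a2 b2 - a0) ltac:(lia).
  by rewrite /tau_letter /=; case: eqP => ? /lab_inj[_ _]; lia.
have := e_letter 0 ltac:(lia); rewrite /tau_letter /= => /lab_inj[_ e1 _].
by congr (_, _, _); lia.
Qed.

(* [edge_label n u v i j] is the label of the vertical edge with abscissa i in
   row j of the pattern with left word tau u and bottom word tau v; by the
   transposition symmetry [hat], the horizontal edge of column i at height j
   carries [edge_label n v u j i]. *)
Definition edge_label n (u v : label) (i j : nat) : label :=
  if i == 0 then tau_letter n u j
  else if j == 0 then lab 0 (v.2 <= i.-1 + v.1.1) (v.1.1 + 1 - v.1.2 + i.-1)
  else lab 1 1 (i + (u.2 <= j.-1 + u.1.1)).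

Definition canonical_pattern n u v : nat -> nat -> tile :=
  edge_pattern (edge_label n u v) (fun i j => edge_label n v u j i).

Definition right_boundary n (u v : label) : seq label :=
  [seq edge_label n u v (n.+1 - v.1.1) j | j <- iota 0 (n.+1 - u.1.1)].

Definition admissible n (u v : label) : Prop :=
  [/\ v.1.1 = 0 -> n <= u.2, u.1.1 = 0 -> n <= v.2,
      v.1.1 = 1 \/ u.1.2 = 0 -> u.2 <= n & u.1.1 = 1 \/ v.1.2 = 0 -> v.2 <= n].

Ltac inT'_cases T :=
  move: T; rewrite /inT' /inW /inB' /inG /inY /inA /inhat /inJ' /okpair => T;
  repeat match goal with
  | H : _ \/ _ |- _ => case: H => H
  | H : exists _, _ |- _ => let x := fresh "x" in case: H => x H
  | H : _ /\ _ |- _ => let H1 := fresh "H" in case: H => H1 H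
  | H : and3 _ _ _ |- _ =>
      let H1 := fresh "H" in let H2 := fresh "H" in case: H => H1 H2 H
  | H : (_, _) = (_, _) |- _ => case: H => ? ?
  end; subst; rewrite /mkt /hat /=.

Ltac solve_tile_eq := rewrite /mkt /lab /hat /=;
  repeat match goal with |- (_, _) = (_, _) => f_equal end; lia.

Lemma okpair_of_leq k l : k <= l <= 1 -> okpair k l.
Proof.
move=> le_kl1; rewrite /okpair.
have [[-> ->]|[[-> ->]|[-> ->]]] :
  (k = 0 /\ l = 0) \/ (k = 0 /\ l = 1) \/ (k = 1 /\ l = 1) by lia.
all: by [left | right; left | right; right].
Qed.

Lemma inT'_hat n t : inT' n t -> inT' n (hat t).
Proof.
case=> [|[|[|[|[|[|[|[|[|]]]]]]]]].
- by case=> i [j [? ? ->]]; left; exists j, i.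
- by move=> ?; do 5 right; left; exists t.
- by move=> ?; do 6 right; left; exists t.
- by move=> ?; do 7 right; left; exists t.
- by move=> ?; do 8 right; left; exists t.
- by case=> s [? ->]; rewrite hatK; right; left.
- by case=> s [? ->]; rewrite hatK; do 2 right; left.
- by case=> s [? ->]; rewrite hatK; do 3 right; left.
- by case=> s [? ->]; rewrite hatK; do 4 right; left.
- by case=> k [l [r [s [? ? ->]]]]; do 9 right; exists r, s, k, l.
Qed.

Lemma inT'_inV n t : inT' n t -> inV n (RIGHT t).
Proof. by move=> T; inT'_cases T; lia. Qed.

Lemma inT'_right_determined n u v i j t : inV n u -> inV n v -> inT' n t ->
  LEFT t = edge_label n u v i j -> BOTTOM t = edge_label n v u j i ->
  RIGHT t = edge_label n u v i.+1 j.
Proof.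
case: u => [[u0 u1] u2]; case: v => [[v0 v1] v2] /= Vu Vv T; inT'_cases T;
  rewrite /edge_label /tau_letter /=;
  case: i => [|i]; case: j => [|j] /= /lab_inj[? ? ?] /lab_inj[? ? ?]; apply: lab_eq; lia.
Qed.

Lemma inT'_determined n u v : inV n u -> inV n v -> forall i j t, inT' n t ->
  LEFT t = edge_label n u v i j -> BOTTOM t = edge_label n v u j i ->
  RIGHT t = edge_label n u v i.+1 j /\ TOP t = edge_label n v u j.+1 i.
Proof.
move=> Vu Vv i j t T eL eB; split; first exact: inT'_right_determined T eL eB.
by case: t T eL eB => [[[r tp] l] b] /inT'_hat T eL eB; apply: inT'_right_determined T _ _.
Qed.

Lemma inT'_admissible n t : inT' n t -> admissible n (LEFT t) (BOTTOM t).
Proof. by move=> T; inT'_cases T; split=> /=; lia. Qed.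

Lemma admissible_sym n u v : admissible n u v -> admissible n v u.
Proof. by case. Qed.

Lemma admissible_inT' n u v : 0 < n -> inV n u -> inV n v -> admissible n u v ->
  exists a b, inT' n (mkt a b u v).
Proof.
move=> n_gt0; wlog le_uv : u v / u.1.1 <= v.1.1 => [hwlog Vu Vv adm|].
  have [le_uv|/ltnW le_vu] := leqP u.1.1 v.1.1; first exact: hwlog.
  have [b [a T]] := hwlog v u le_vu Vv Vu (admissible_sym adm).
  by exists a, b; apply: (inT'_hat T).
case: u le_uv => [[u0 u1] u2]; case: v => [[v0 v1] v2] /= le_uv.
move=> [? [? [? ?]]] [? [? [? ?]]] [/= adm1 adm2 adm3 adm4].
have [[? ?]|[[? ?]|[? ?]]] :
  (u0 = 0 /\ v0 = 0) \/ (u0 = 0 /\ v0 = 1) \/ (u0 = 1 /\ v0 = 1) by lia.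
- exists (lab 0 (v2 - n) v1), (lab 0 (u2 - n) u1); do 9 right.
  by exists (v2 - n), v1, (u2 - n), u1; split; [apply: okpair_of_leq; lia .. | solve_tile_eq].
- have [[? ?]|[[? ?]|[[? ?]|[? ?]]]] :
    (v2 = n /\ u1 = 0) \/ (v2 = n /\ u1 = 1) \/
    (v2 = n.+1 /\ u1 = 0) \/ (v2 = n.+1 /\ u1 = 1) by lia.
  + exists (lab 0 0 u2.+1), (lab 1 1 1); right; left.
    by exists u2; split; [lia | solve_tile_eq].
  + exists (lab 0 0 u2.+1), (lab 1 1 2); do 4 right; left.
    by exists u2; split; [lia | solve_tile_eq].
  + exists (lab 0 1 u2.+1), (lab 1 1 1); do 2 right; left.
    by exists u2; split; [lia | solve_tile_eq].
  + exists (lab 0 1 u2.+1), (lab 1 1 2); do 3 right; left.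
    by exists u2; split; [lia | solve_tile_eq].
- exists (lab 1 1 u2.+1), (lab 1 1 v2.+1); left; exists u2, v2; split; [lia .. | solve_tile_eq].
Qed.

Lemma canonical_tile_inT' n u v i j : 0 < n -> inV n u -> inV n v -> admissible n u v ->
  i < n.+1 - v.1.1 -> j < n.+1 - u.1.1 -> inT' n (canonical_pattern n u v i j).
Proof.
case: u => [[u0 u1] u2]; case: v => [[v0 v1] v2] n_gt0 /=.
move=> [? [? [? ?]]] [? [? [? ?]]] [/= adm1 adm2 _ _] lt_i lt_j.
rewrite /canonical_pattern /edge_pattern /edge_label /tau_letter /=.
case: i lt_i => [|i] lt_i; case: j lt_j => [|j] lt_j /=.
- do 9 right; exists (v2 <= v0), (v0 + 1 - v1), (u2 <= u0), (u0 + 1 - u1).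
  by split; [apply: okpair_of_leq; lia .. | solve_tile_eq].
- have [le_u2|lt_u2] := leqP u2 (j + u0); have [le_u2'|lt_u2'] := leqP u2 (j.+1 + u0); try lia.
  + do 7 right; left; eexists; split;
      [exists (u0 + 1 - u1 + j); split; [lia | reflexivity] | solve_tile_eq].
  + do 6 right; left; eexists; split;
      [exists (u0 + 1 - u1 + j); split; [lia | reflexivity] | solve_tile_eq].
  + do 5 right; left; eexists; split;
      [exists (u0 + 1 - u1 + j); split; [lia | reflexivity] | solve_tile_eq].
- have [le_v2|lt_v2] := leqP v2 (i + v0); have [le_v2'|lt_v2'] := leqP v2 (i.+1 + v0); try lia.
  + do 3 right; left; exists (v0 + 1 - v1 + i); split; [lia | solve_tile_eq].
  + do 2 right; left; exists (v0 + 1 - v1 + i); split; [lia | solve_tile_eq].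
  + right; left; exists (v0 + 1 - v1 + i); split; [lia | solve_tile_eq].
- left; exists (i.+1 + (u2 <= j + u0)), (j.+1 + (v2 <= i + v0)); split; [lia .. | solve_tile_eq].
Qed.

Lemma inT'_right_boundary n t : 0 < n -> inT' n t ->
  right_boundary n (LEFT t) (BOTTOM t) = tau n (RIGHT t).
Proof.
move=> n_gt0 T; rewrite tau_map //; last exact: inT'_inV.
apply/map_iota0_eq; inT'_cases T; split=> [|j lt_j]; rewrite /edge_label /tau_letter /=;
  try lia; do 2?case: eqP => ?; apply: lab_eq; lia.
Qed.

Lemma boundary_bounds n u v alpha beta : 0 < n ->
  inV n u -> inV n v -> inV n alpha -> inV n beta ->
  right_boundary n u v = tau n alpha -> right_boundary n v u = tau n beta ->
  (v.1.1 = 0 -> n <= u.2) /\ (v.1.1 = 1 \/ u.1.2 = 0 -> u.2 <= n).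
Proof.
move=> n_gt0 Vu Vv Va Vb; rewrite !tau_map // => /map_iota0_eq[_ eR] /map_iota0_eq[eb eT].
move: Vu Vv Va Vb eR eb eT; case: u => [[u0 u1] u2]; case: v => [[v0 v1] v2].
case: alpha => [[a0 a1] a2]; case: beta => [[b0 b1] b2] /=.
move=> [? [? [? ?]]] [? [? [? ?]]] [? [? [? ?]]] [? [? [? ?]]] eR eb eT.
split=> [v0_eq0 | v0_eq1_or_u1_eq0].
- have [?|n_gt_u0] := leqP (n - u0) 0; first lia.
  have := eR (n - u0) ltac:(lia); rewrite /edge_label /tau_letter /=.
  by do 2?case: eqP => ?; move/lab_inj => [? ? ?]; lia.
- have := eT 0 ltac:(lia); rewrite /edge_label /tau_letter /=.
  by case: eqP => ?; move/lab_inj => [? ? ?]; lia.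
Qed.

Lemma boundary_admissible n u v alpha beta : 0 < n ->
  inV n u -> inV n v -> inV n alpha -> inV n beta ->
  right_boundary n u v = tau n alpha -> right_boundary n v u = tau n beta ->
  admissible n u v.
Proof.
move=> n_gt0 Vu Vv Va Vb eR eT.
have [adm1 adm3] := boundary_bounds n_gt0 Vu Vv Va Vb eR eT.
have [adm2 adm4] := boundary_bounds n_gt0 Vv Vu Vb Va eT eR.
by split.
Qed.

Lemma tiling_boundary n u v w h f : 0 < n -> inV n u -> inV n v -> 0 < w -> 0 < h ->
  valid_pattern (inT' n) w h f ->
  left_labels w h f = tau n u -> bottom_labels w h f = tau n v ->
  [/\ w = n.+1 - v.1.1, h = n.+1 - u.1.1,
      right_labels w h f = right_boundary n u v & top_labels w h f = right_boundary n v u].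
Proof.
move=> n_gt0 Vu Vv w_gt0 h_gt0 fP; rewrite !tau_map // => fL fB.
move: (fL) (fB) => /map_iota0_eq[eh _] /map_iota0_eq[ew _]; subst w h.
have [fR fT] := @valid_pattern_labels (edge_label n u v) (fun i j => edge_label n v u j i)
  _ (inT'_determined Vu Vv) _ _ f w_gt0 h_gt0 fP fL fB.
by split.
Qed.

Theorem proposition5p9 (n : nat) (alpha beta u v : label) :
  1 <= n -> inV n alpha -> inV n beta -> inV n u -> inV n v ->
  ((exists (w h : nat) (f : nat -> nat -> tile),
      0 < w /\ 0 < h /\ valid_pattern (inT' n) w h f /\
      right_labels w h f = tau n alpha /\
      top_labels w h f = tau n beta /\
      left_labels w h f = tau n u /\
      bottom_labels w h f = tau n v)
   <-> inT' n (mkt alpha beta u v)).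
Proof.
move=> n_gt0 Va Vb Vu Vv; split.
- case=> w [h [f [w_gt0 [h_gt0 [fP [fR [fT [fL fB]]]]]]]].
  have [_ _ eR eT] := tiling_boundary n_gt0 Vu Vv w_gt0 h_gt0 fP fL fB.
  rewrite eR in fR; rewrite eT in fT.
  have [a [b T]] := admissible_inT' n_gt0 Vu Vv (boundary_admissible n_gt0 Vu Vv Va Vb fR fT).
  have -> : alpha = a.
    apply: (tau_inj n_gt0 Va (inT'_inV T)).
    by rewrite -fR (inT'_right_boundary n_gt0 T).
  have -> : beta = b.
    apply: (tau_inj n_gt0 Vb (inT'_inV (inT'_hat T))).
    by rewrite -fT (inT'_right_boundary n_gt0 (inT'_hat T)).
  exact: T.
- move=> T; exists (n.+1 - v.1.1), (n.+1 - u.1.1), (canonical_pattern n u v).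
  have w_gt0 : 0 < n.+1 - v.1.1 by case: v Vv {T} => [[? ?] ?] /=; lia.
  have h_gt0 : 0 < n.+1 - u.1.1 by case: u Vu {T} => [[? ?] ?] /=; lia.
  have [-> -> -> ->] :=
    edge_pattern_labels (edge_label n u v) (fun i j => edge_label n v u j i) w_gt0 h_gt0.
  do 2 (split; first done).
  split.
    by apply: edge_pattern_valid => i j; apply: canonical_tile_inT' (inT'_admissible T).
  split; first exact: inT'_right_boundary n_gt0 T.
  split; first exact: inT'_right_boundary n_gt0 (inT'_hat T).
  by split; rewrite tau_map.
Qed.
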